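(* Let $G$ be a plane graph on $n\ge 174$ vertices containing no subgraph isomorphic to $C_3\dot\cup\Theta_4$. If $|E_I(G)|>\frac n2$ and $\Delta_I(G)\le 9$, then $|E_I(G)|\le \frac n2+4$. Moreover, if $|E_I(G)|=\lfloor n/2\rfloor+4$, then $G$ contains a subgraph isomorphic to $\left(\lfloor\frac{n-2}{2}\rfloor K_2\right)+K_2$.
   Context: $\Theta_4$ is $K_4$ minus one edge and $C_3\dot\cup\Theta_4$ is its vertex-disjoint union with a triangle. For a plane graph $G$, a 3-face is a face whose boundary has length 3; $E_I(G)$ is the set of edges of $G$ lying on the boundaries of two 3-faces, and $\Delta_I(G)$ is the maximum degree of the spanning subgraph of $G$ with edge set $E_I(G)$. $tK_2$ is a matching of $t$ edges and $A+B$ is the join of $A$ and $B$. *)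

From mathcomp Require Import all_boot.
Set Implicit Arguments. Unset Strict Implicit. Unset Printing Implicit Defensive.

Definition simple_graph (T : finType) (e : rel T) : Prop :=
  symmetric e /\ irreflexive e.

Definition darts (T : finType) (e : rel T) : {set T * T} :=
  [set p : T * T | e p.1 p.2].

Definition facef (T : finType) (sigma : T * T -> T * T) (p : T * T) : T * T :=
  sigma (p.2, p.1).

(* the facial orbit (boundary walk of a face of the component) through p *)
Definition faceorb (T : finType) (sigma : T * T -> T * T) (p : T * T)
  : {set T * T} := [set q | fconnect (facef sigma) p q].

Definition comp (T : finType) (e : rel T) (u : T) : {set T} :=
  [set v | connect e u v].

Definition rotation_system (T : finType) (e : rel T)
  (sigma : T * T -> T * T) : Prop :=
  (forall p, p \in darts e -> sigma p \in darts e /\ (sigma p).1 = p.1) /\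
  (forall p q, p \in darts e -> q \in darts e -> p.1 = q.1 ->
     fconnect sigma p q).

(* every component with an edge is embedded in the sphere (genus 0):
   V_c - E_c + F_c = 2, written as 2 V_c + 2 F_c = 4 + (#darts of c). *)
Definition genus0 (T : finType) (e : rel T) (sigma : T * T -> T * T) : Prop :=
  forall u : T, (exists v, e u v) ->
    2 * #|comp e u|
    + 2 * #|[set faceorb sigma p | p in [set q in darts e | q.1 \in comp e u]]|
    = 4 + #|[set q in darts e | q.1 \in comp e u]|.

(* Faces of the whole (possibly disconnected) plane graph, each given by the
   set of darts of its boundary walk(s): every face is a union of facial
   orbits, at most one from each component, the faces partition the darts,
   and the incidence graph "components -- faces" is a tree. *)
Definition face_rel (T : finType) (e : rel T) (F : {set {set T * T}})
  (p q : T * T) : bool :=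
  [&& p \in darts e, q \in darts e &
      [exists X in F, (p \in X) && (q \in X)] || connect e p.1 q.1].

Definition plane_faces (T : finType) (e : rel T) (sigma : T * T -> T * T)
  (F : {set {set T * T}}) : Prop :=
  partition F (darts e) /\
  (forall X, X \in F -> forall p, p \in X -> faceorb sigma p \subset X) /\
  (forall X, X \in F -> forall p q, p \in X -> q \in X ->
     connect e p.1 q.1 -> faceorb sigma p = faceorb sigma q) /\
  (darts e != set0 ->
     (forall p q, p \in darts e -> q \in darts e -> connect (face_rel e F) p q)
     /\ #|[set faceorb sigma p | p in darts e]| + 1
        = #|[set comp e p.1 | p in darts e]| + #|F|).

Definition plane_embedding (T : finType) (e : rel T) (sigma : T * T -> T * T)
  (F : {set {set T * T}}) : Prop :=
  simple_graph e /\ rotation_system e sigma /\ genus0 e sigma /\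
  plane_faces e sigma F.

Definition three_face (T : finType) (X : {set T * T}) : bool := #|X| == 3.

Definition on_face (T : finType) (p : T * T) (X : {set T * T}) : bool :=
  (p \in X) || ((p.2, p.1) \in X).

Definition EI_dart (T : finType) (F : {set {set T * T}}) (p : T * T) : bool :=
  [exists X in F, exists Y in F,
     [&& X != Y, three_face X, three_face Y, on_face p X & on_face p Y]].

Definition E_I (T : finType) (e : rel T) (F : {set {set T * T}})
  : {set {set T}} :=
  [set [set p.1; p.2] | p in [set q in darts e | EI_dart F q]].

Definition degI (T : finType) (e : rel T) (F : {set {set T * T}}) (u : T)
  : nat := #|[set v | [set u; v] \in E_I e F]|.

Definition contains_subgraph (T : finType) (e : rel T) (k : nat)
  (H : rel 'I_k) : Prop :=
  exists f : 'I_k -> T, injective f /\ forall i j, H i j -> e (f i) (f j).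

(* C_3 disjoint union Theta_4 on vertices 0..6: triangle {0,1,2};
   K_4 minus the edge {5,6} on {3,4,5,6}. *)
Definition C3_Theta4 : rel 'I_7 := fun i j =>
  let a := val i in let b := val j in
  (a != b) &&
  (((a < 3) && (b < 3)) ||
   [&& 3 <= a, 3 <= b & ~~ ((4 < a) && (4 < b))]).

(* (t K_2) + K_2 on vertices 0..2t+1: matching {2i,2i+1} for i<t, the
   edge {2t,2t+1}, and all edges between {2t,2t+1} and the rest. *)
Definition matching_join_K2 (t : nat) : rel 'I_(t.*2 + 2) := fun i j =>
  let a := val i in let b := val j in
  (a != b) && [|| t.*2 <= a, t.*2 <= b | a./2 == b./2].

From mathcomp Require Import all_boot zify.
Set Implicit Arguments. Unset Strict Implicit. Unset Printing Implicit Defensive.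

(* An edge uv of E_I lies on two triangular faces uvw and uvw'.  If w = w', both
   orientations of the triangle uvw bound faces, and the whole graph is that
   triangle; so w <> w' and {u,v,w,w'} spans a Theta_4 with spine uv and poles
   w, w'.  Without C_3 + Theta_4 every triangle meets every Theta_4.  As
   Delta_I <= 9 and |E_I| > 81, some E_I edge avoids any nine given vertices,
   and comparing three such spines yields two vertices x, y that are the poles
   of spines avoiding any three given vertices.  Then every triangle meets
   {x, y}: the E_I edges missing x and y are spines with poles x, y and form a
   matching of V - {x, y}; each E_I edge px with p <> y has y as a pole, so
   pxy is a face, and xy lies on at most two faces.  Hence
   |E_I| <= (n - 2)/2 + 2 + 2 + 1, and in the extremal case xy is an edge and
   the matching has (n - 2)/2 edges, all joined to x and y. *)

Lemma exists_disjoint_member (U : finType) (P : {set {set U}}) d (s : seq U) :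
  (forall z, #|[set A in P | z \in A]| <= d) -> d * size s < #|P| ->
  exists2 A, A \in P & [disjoint A & s].
Proof.
move=> degP ltP.
pose meeting (s : seq U) := [set A in P | ~~ [disjoint A & s]].
have card_meeting s' : #|meeting s'| <= d * size s'.
  elim: s' => [|z s' IH].
    by rewrite muln0 leqn0 cards_eq0; apply/eqP/setP => A; rewrite !inE disjoint_sym disjoint0 andbF.
  have sub : meeting (z :: s') \subset [set A in P | z \in A] :|: meeting s'.
    apply/subsetP => A; rewrite !inE disjoint_sym disjoint_cons disjoint_sym negb_and negbK.
    by case/andP=> -> /orP[] ->; rewrite ?orbT.
  by rewrite mulnS (leq_trans (subset_leq_card sub)) // (leq_trans (leq_card_setU _ _)) ?leq_add.
have /subsetPn[A AP] : ~~ (P \subset meeting s).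
  by apply: contraTN ltP => /subset_leq_card/leq_trans/(_ (card_meeting s)); rewrite leqNgt.
by rewrite inE AP negbK; exists A.
Qed.

Lemma enum_set2 (U : finType) (u v : U) : u != v ->
  enum [set u; v] = [:: u; v] \/ enum [set u; v] = [:: v; u].
Proof.
move=> uv; have := enum_uniq [set u; v]; have := cardE [set u; v].
have mem_uv z : z \in enum [set u; v] -> z = u \/ z = v by rewrite mem_enum => /set2P.
have [uE vE] : u \in enum [set u; v] /\ v \in enum [set u; v] by rewrite !mem_enum !inE !eqxx orbT.
move: mem_uv uE vE; rewrite cards2 uv.
case: (enum _) => [|a [|b []]] // mem_uv uE vE _; rewrite /= inE andbT => ab.
have [ea|ea] := mem_uv a (mem_head _ _); have [eb|eb] := mem_uv b (mem_last a [:: b]);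
  subst a b; by [left | right | rewrite eqxx in ab].
Qed.

Lemma eq_set2 (U : finType) (a b c d : U) : c != d -> [set a; b] = [set c; d] ->
  (a = c /\ b = d) \/ (a = d /\ b = c).
Proof.
move=> cd E.
have aE : a \in [set c; d] by rewrite -E set21.
have bE : b \in [set c; d] by rewrite -E set22.
have cE : c \in [set a; b] by rewrite E set21.
have dE : d \in [set a; b] by rewrite E set22.
case/set2P: aE cE dE => ->; case/set2P: bE => -> cE dE; [| by left | by right |].
- by move: cd; rewrite !inE orbb in dE; rewrite (eqP dE) eqxx.
- by move: cd; rewrite !inE orbb in cE; rewrite (eqP cE) eqxx.
Qed.

Lemma pair_other (U : finType) (A : {set U}) u v z : A = [set u; v] -> z \in A ->
  exists2 p, A = [set p; z] & p \in A.
Proof.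
move=> -> /set2P[->|->]; first by exists v; [rewrite setUC | exact: set22].
by exists u; last exact: set21.
Qed.

Lemma set3_eq (U : finType) (X : {set U}) a b c :
  #|X| = 3 -> a \in X -> b \in X -> c \in X -> uniq [:: a; b; c] -> X = [set a; b; c].
Proof.
move=> X3 aX bX cX abc; apply/eqP; rewrite eq_sym eqEcard X3.
have -> : #|[set a; b; c]| = #|[:: a; b; c]| by apply: eq_card => z; rewrite !inE orbA.
rewrite (card_uniqP abc) leqnn andbT.
by apply/subsetP => z; rewrite !inE => /orP[/orP[]|] /eqP->.
Qed.

Lemma card3_cycle (U : finType) (g : U -> U) (X : {set U}) p :
  {in X, forall q, g q \in X} -> {in X &, injective g} -> {in X, forall q, g q != q} ->
  #|X| = 3 -> p \in X -> X = [set p; g p; g (g p)] /\ g (g (g p)) = p.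
Proof.
move=> gX g_inj g_neq X3 pX.
have p1X := gX p pX; have p2X := gX _ p1X; have p3X := gX _ p2X.
have n01 := g_neq p pX; have n12 := g_neq _ p1X; have n23 := g_neq _ p2X.
have n02 : g (g p) != p.
  apply/eqP => p2p.
  have /subsetPn[r rX] : ~~ (X \subset [set p; g p]).
    by apply/negP => /subset_leq_card; rewrite X3 cards2; case: (_ != _).
  rewrite !inE negb_or => /andP[rp rp1].
  have EX : X = [set p; g p; r].
    by apply: set3_eq; rewrite //= !inE !negb_or (eq_sym p (g p)) n01 (eq_sym p r) rp (eq_sym (g p) r) rp1.
  have := gX r rX; rewrite EX !inE (negbTE (g_neq r rX)) orbF => /orP[] /eqP grE.
    by move: rp1; rewrite -(g_inj _ _ rX p1X) ?eqxx // grE p2p.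
  by move: rp; rewrite -(g_inj _ _ rX pX) ?eqxx.
have EX : X = [set p; g p; g (g p)].
  by apply: set3_eq; rewrite //= !inE !negb_or (eq_sym p (g p)) n01 (eq_sym p) n02 (eq_sym (g p)) n12.
split=> //; have := p3X; rewrite EX !inE (negbTE n23) orbF => /orP[/eqP //|/eqP p3p1].
by move: n02; rewrite (g_inj _ _ p2X pX p3p1) eqxx.
Qed.

Lemma connect_inv (U : finType) (R : rel U) (A : {pred U}) x y :
  (forall a b, a \in A -> R a b -> b \in A) -> connect R x y -> x \in A -> y \in A.
Proof.
move=> clA /connectP[p Rp ->]; elim: p x Rp => //= z p IH x /andP[Rxz Rp] xA.
exact: IH Rp (clA _ _ xA Rxz).
Qed.

Lemma adj_neq (T : finType) (e : rel T) u v : irreflexive e -> e u v -> u != v.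
Proof. by move=> irr_e; apply: contraTneq => ->; rewrite irr_e. Qed.

Section C3Theta4Free.
Variables (T : finType) (e : rel T).
Hypotheses (sym_e : symmetric e) (irr_e : irreflexive e).
Hypothesis noC3Theta4 : ~ contains_subgraph e C3_Theta4.

(* u, v, x, y span a Theta_4 = K_4 - xy, whose two triangles uvx and uvy share
   the spine uv; x and y are its poles. *)
Definition theta4 (u v x y : T) :=
  [&& uniq [:: u; v; x; y], e u v, e u x, e u y, e v x & e v y].

Lemma theta4C u v x y : theta4 u v x y = theta4 v u x y.
Proof.
rewrite /theta4.
have /perm_uniq-> : perm_eq [:: u; v; x; y] [:: v; u; x; y] by apply/permP => p /=; lia.
by rewrite (sym_e v u); case: (e u x) (e u y) (e v x) (e v y) => [] [] [] []; rewrite ?andbF.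
Qed.

Lemma theta4_poleC u v x y : theta4 u v x y = theta4 u v y x.
Proof.
rewrite /theta4.
have /perm_uniq-> : perm_eq [:: u; v; x; y] [:: u; v; y; x] by apply/permP => p /=; lia.
by case: (e u x) (e u y) (e v x) (e v y) => [] [] [] []; rewrite ?andbF.
Qed.

Lemma theta4_poles_neq u v x y : theta4 u v x y -> x != y.
Proof. by case/and5P=> /= /and4P[_ _]; rewrite inE. Qed.

Lemma theta4_poles_eq u v w w' x y : theta4 u v w w' ->
  (w == x) || (w == y) -> (w' == x) || (w' == y) -> theta4 u v x y.
Proof.
move=> th /orP[]/eqP Ew /orP[]/eqP Ew'; subst w w'; rewrite // theta4_poleC //.
all: by have := theta4_poles_neq th; rewrite eqxx.
Qed.

Lemma theta4_glue z q1 q2 x y : theta4 z q1 x y -> theta4 z q2 x y -> q1 != q2 ->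
  theta4 z x q1 q2.
Proof.
move=> /and5P[/= + ezq1 ezx _ /andP[eq1x _]] /and5P[/= + ezq2 _ _ /andP[eq2x _]] q12.
rewrite !inE !negb_or => /and4P[/and3P[zq1 zx _] /andP[q1x _] _ _].
move=> /and4P[/and3P[zq2 _ _] /andP[q2x _] _ _].
by rewrite /theta4 /= !inE !negb_or zx zq1 zq2 !(eq_sym x) q1x q2x q12 ezx ezq1 ezq2 !(sym_e x) eq1x eq2x.
Qed.

Lemma theta4_set2 u v a b x y : [set u; v] = [set a; b] -> theta4 u v x y -> theta4 a b x y.
Proof.
move=> E th; have /and5P[_ /(adj_neq irr_e) uv _ _ _] := th.
by case: (eq_set2 uv (esym E)) => -[-> ->] //; rewrite theta4C.
Qed.

Lemma triangle_meets_theta4 a b c u v x y :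
  e a b -> e b c -> e c a -> theta4 u v x y -> has (mem [:: u; v; x; y]) [:: a; b; c].
Proof.
move=> eab ebc eca /and5P[uniq_uvxy euv eux euy /andP[evx evy]].
apply/negPn/negP => disj; apply: noC3Theta4.
pose s := [:: a; b; c; u; v; x; y].
have uniq_s : uniq s.
  rewrite -[s]/([:: a; b; c] ++ [:: u; v; x; y]) cat_uniq uniq_uvxy has_sym disj andbT.
  by rewrite andbT /= !inE !negb_or (adj_neq irr_e eab) (adj_neq irr_e ebc) (eq_sym a c) (adj_neq irr_e eca).
exists (fun i : 'I_7 => nth a s i); split.
  by move=> i j /eqP; rewrite nth_uniq // => /eqP/val_inj.
by move=> [[|[|[|[|[|[|[|i]]]]]]] ?] [[|[|[|[|[|[|[|j]]]]]]] ?] //=; rewrite // sym_e.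
Qed.

Lemma triangle_apex_in_theta4 a b c u v x y :
  e a b -> e b c -> e c a -> theta4 u v x y ->
  a \notin [:: u; v; x; y] -> b \notin [:: u; v; x; y] -> c \in [:: u; v; x; y].
Proof.
move=> eab ebc eca th an bn; have := triangle_meets_theta4 eab ebc eca th.
by rewrite /= (negbTE an) (negbTE bn) orbF.
Qed.

Lemma theta4_pole_in_triangle a b c u v x y :
  e a b -> e b c -> e c a -> theta4 u v x y ->
  u \notin [:: a; b; c] -> v \notin [:: a; b; c] ->
  (x \in [:: a; b; c]) || (y \in [:: a; b; c]).
Proof.
move=> eab ebc eca th un vn; have := triangle_meets_theta4 eab ebc eca th.
by rewrite has_sym /= (negbTE un) (negbTE vn) orbF.
Qed.

Section MatchingJoin.
Variables (x y : T) (M : {set {set T}}) (t : nat).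
Hypotheses (exy : e x y) (trivM : trivIset M) (tM : t <= #|M|).
Hypothesis M_theta4 : forall A, A \in M -> exists u v, A = [set u; v] /\ theta4 u v x y.

Let matched k := nth set0 (enum M) k.
Let endpt k (b : bool) := nth x (enum (matched k)) b.

Lemma matched_in_M k : k < t -> matched k \in M.
Proof. by move=> kt; rewrite -mem_enum mem_nth // -cardE (leq_trans kt). Qed.

Lemma endpt_theta4 k : k < t -> theta4 (endpt k false) (endpt k true) x y.
Proof.
move=> /matched_in_M/M_theta4[u [v [Ak th]]].
have /and5P[_ /(adj_neq irr_e) uv _ _ _] := th.
by rewrite /endpt Ak; case: (enum_set2 uv) => ->; rewrite //= theta4C.
Qed.

Lemma endpt_in_matched k b : k < t -> endpt k b \in matched k.
Proof.
move=> kt; have /M_theta4[u [v [Ak /and5P[_ /(adj_neq irr_e) uv _ _ _]]]] := matched_in_M kt.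
by rewrite /endpt -mem_enum mem_nth // -cardE Ak cards2 uv; case: b.
Qed.

Lemma endpt_inj k k' b b' : k < t -> k' < t -> endpt k b = endpt k' b' -> k = k' /\ b = b'.
Proof.
move=> kt k't E.
have kk' : k = k'.
  have in_k := endpt_in_matched b kt; have in_k' := endpt_in_matched b' k't; rewrite -E in in_k'.
  have /eqP : matched k = matched k'.
    by rewrite -(def_pblock trivM (matched_in_M kt) in_k) (def_pblock trivM (matched_in_M k't) in_k').
  by rewrite nth_uniq ?enum_uniq -?cardE ?(leq_trans _ tM) // => /eqP.
subst k'; split=> //.
have /and5P[_ /(adj_neq irr_e) ne _ _ _] := endpt_theta4 kt.
by case: b b' E ne => [] [] // ->; rewrite eqxx.
Qed.

Lemma endpt_adj_poles k b : k < t ->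
  [&& endpt k b != x, endpt k b != y, e (endpt k b) x & e (endpt k b) y].
Proof.
move=> /endpt_theta4 /and5P[/= uniq_uvxy _ eux euy /andP[evx evy]].
move: uniq_uvxy; rewrite !inE !negb_or => /and4P[/and3P[_ ux uy] /andP[vx vy] _ _].
by case: b; rewrite ?ux ?uy ?vx ?vy ?eux ?euy ?evx ?evy.
Qed.

Let vertex (i : nat) := if i < t.*2 then endpt i./2 (odd i) else if i == t.*2 then x else y.

Lemma vertex_pole i : t.*2 <= i -> (vertex i == x) || (vertex i == y).
Proof. by rewrite /vertex leqNgt => /negbTE->; case: ifP; rewrite eqxx ?orbT. Qed.

Lemma vertex_matched i : i < t.*2 ->
  [&& vertex i != x, vertex i != y, e (vertex i) x & e (vertex i) y].
Proof. by move=> i2t; rewrite /vertex i2t endpt_adj_poles ?ltn_half_double. Qed.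

Lemma vertex_inj : injective (fun i : 'I_(t.*2 + 2) => vertex i).
Proof.
move=> [i ilt] [j jlt] /= E; apply: val_inj => /=.
case: (ltnP i t.*2) => i2t; case: (ltnP j t.*2) => j2t.
- move: E; rewrite /vertex i2t j2t => /endpt_inj[]; rewrite ?ltn_half_double // => hk ho.
  by rewrite -(odd_double_half i) -(odd_double_half j) hk ho.
- by move: (vertex_matched i2t); rewrite E; case/orP: (vertex_pole j2t) => /eqP->; rewrite eqxx ?andbF.
- by move: (vertex_matched j2t); rewrite -E; case/orP: (vertex_pole i2t) => /eqP->; rewrite eqxx ?andbF.
- move: E; rewrite /vertex !ltnNge i2t j2t /=.
  by case: ifP; case: ifP => /eqP ? /eqP ? xy; [lia | | |lia]; move: (adj_neq irr_e exy); rewrite ?xy eqxx.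
Qed.

Lemma vertex_adj i j : i < t.*2 + 2 -> j < t.*2 + 2 -> i != j ->
  [|| t.*2 <= i, t.*2 <= j | i./2 == j./2] -> e (vertex i) (vertex j).
Proof.
move=> ilt jlt ij; case: (ltnP i t.*2) => i2t; case: (ltnP j t.*2) => j2t //=.
- move=> /eqP hk; rewrite /vertex i2t j2t hk.
  have oij : odd i = ~~ odd j.
    have := odd_double_half i; have := odd_double_half j; rewrite hk.
    by case: (odd i); case: (odd j) => //= Ej Ei; case/negP: ij; rewrite -Ei Ej.
  have /endpt_theta4/and5P[_ euv _ _ _] : j./2 < t by rewrite ltn_half_double.
  by rewrite oij; case: (odd j); rewrite // sym_e.
- by case/orP: (vertex_pole j2t) => /eqP->; case/and4P: (vertex_matched i2t).
- by case/orP: (vertex_pole i2t) => /eqP->; rewrite sym_e; case/and4P: (vertex_matched j2t).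
- move: ij; rewrite /vertex !ltnNge i2t j2t /=.
  by case: ifP; case: ifP => /eqP ? /eqP ? ij //; first [lia | rewrite sym_e].
Qed.

Lemma contains_matching_join_K2 : contains_subgraph e (@matching_join_K2 t).
Proof.
exists (fun i => vertex i); split; first exact: vertex_inj.
by move=> i j /andP[ij adj]; apply: vertex_adj.
Qed.

End MatchingJoin.

Lemma theta4_poles_in_theta4 u v x y a b c d :
  theta4 u v x y -> theta4 a b c d ->
  u \notin [:: a; b; c; d] -> v \notin [:: a; b; c; d] ->
  (x \in [:: a; b; c; d]) && (y \in [:: a; b; c; d]).
Proof.
move=> /and5P[_ euv eux euy /andP[evx evy]] th un vn.
by rewrite !(triangle_apex_in_theta4 euv _ _ th un vn) // sym_e.
Qed.

Definition universal_poles x y :=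
  forall a b c : T, exists u v,
    [&& theta4 u v x y, u \notin [:: a; b; c] & v \notin [:: a; b; c]].

Lemma universal_polesC x y : universal_poles x y -> universal_poles y x.
Proof. by move=> poles a b c; have [u [v]] := poles a b c; exists u, v; rewrite -theta4_poleC. Qed.

Lemma universal_poles_triangle x y a b c : universal_poles x y ->
  e a b -> e b c -> e c a -> (x \in [:: a; b; c]) || (y \in [:: a; b; c]).
Proof.
move=> /(_ a b c)[u [v /and3P[th un vn]]] eab ebc eca.
exact: theta4_pole_in_triangle th un vn.
Qed.

Lemma universal_poles_theta4 x y a b c : universal_poles x y ->
  theta4 a x b c -> y \in [:: a; b; c].
Proof.
move=> /(_ a b c)[u [v /and3P[th un vn]]] th'.
have /and5P[/= uniq_uvxy euv _ euy /andP[_ evy]] := th.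
move: uniq_uvxy; rewrite !inE !negb_or => /and4P[/and3P[_ ux _] /andP[vx _] xy _].
have notin z : z \notin [:: a; b; c] -> z != x -> z \notin [:: a; x; b; c].
  by rewrite !inE => zn /negbTE->.
have := triangle_apex_in_theta4 euv evy _ th' (notin u un ux) (notin v vn vx).
by rewrite sym_e !inE (eq_sym y x) (negbTE xy) => /(_ euy).
Qed.

Section SpineEdges.
Variable EE : {set {set T}}.
Hypothesis EE_pair : forall A, A \in EE -> exists u v, A = [set u; v].
Hypothesis EE_spine : forall u v, [set u; v] \in EE -> exists x y, theta4 u v x y.

Section Abundance.
Hypothesis EE_deg : forall z, #|[set v | [set z; v] \in EE]| <= 9.
Hypothesis EE_big : 81 < #|EE|.

Lemma card_EE_at z : #|[set A in EE | z \in A]| <= 9.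
Proof.
apply: leq_trans (EE_deg z); apply: leq_trans (leq_imset_card (fun v => [set v; z]) _).
apply/subset_leq_card/subsetP => A; rewrite inE => /andP[AE zA].
have [u [v Auv]] := EE_pair AE; have [w Aw _] := pair_other Auv zA.
by apply/imsetP; exists w; rewrite // inE setUC -Aw.
Qed.

Lemma exists_spine_avoiding (s : seq T) : size s <= 9 ->
  exists u v x y, [&& theta4 u v x y, u \notin s & v \notin s].
Proof.
move=> ss; have [|A AE disj] := @exists_disjoint_member _ EE 9 s card_EE_at.
  by apply: leq_trans EE_big; lia.
have [u [v Auv]] := EE_pair AE; rewrite Auv in AE disj.
have [x [y th]] := EE_spine AE.
by exists u, v, x, y; rewrite th (disjointFr disj (set21 u v)) (disjointFr disj (set22 u v)).
Qed.

Lemma exists_universal_poles : exists x y, universal_poles x y.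
Proof.
have [u0 [v0 [c [d /and3P[th0 _ _]]]]] := exists_spine_avoiding (s := [::]) isT.
set S0 := [:: u0; v0; c; d].
have [u1 [v1 [x [y /and3P[th1 u1S0 v1S0]]]]] := exists_spine_avoiding (s := S0) isT.
have /andP[xS0 yS0] := theta4_poles_in_theta4 th1 th0 u1S0 v1S0.
exists x, y => a b c'.
have [u [v [w [w' /and3P[th uS vS]]]]] :=
  exists_spine_avoiding (s := S0 ++ [:: u1; v1; a; b; c']) isT.
move: uS vS; rewrite !mem_cat => /norP[uS0 uR] /norP[vS0 vR].
(* The poles w, w' lie in S0, so they differ from u1, v1 and must be x, y. *)
have /andP[wS0 w'S0] := theta4_poles_in_theta4 th th0 uS0 vS0.
have notin_theta1 z : z \notin S0 -> z \notin [:: u1; v1; a; b; c'] -> z \notin [:: u1; v1; x; y].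
  move=> zS0; rewrite !inE (eq_sym z x) (eq_sym z y).
  by rewrite (negbTE (memPn zS0 x xS0)) (negbTE (memPn zS0 y yS0)) /= orbF !negb_or => /and3P[-> ->].
have pole_xy z : z \in S0 -> z \in [:: u1; v1; x; y] -> (z == x) || (z == y).
  by move=> zS0; rewrite !inE (negbTE (memPn u1S0 z zS0)) (negbTE (memPn v1S0 z zS0)).
have /andP[w1 w'1] := theta4_poles_in_theta4 th th1 (notin_theta1 u uS0 uR) (notin_theta1 v vS0 vR).
have drop2 z : z \notin [:: u1; v1; a; b; c'] -> z \notin [:: a; b; c'].
  by apply: contra => zR; rewrite 2!in_cons zR !orbT.
exists u, v; rewrite !drop2 // !andbT.
by apply: (theta4_poles_eq th); [apply: pole_xy wS0 w1 | apply: pole_xy w'S0 w'1].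
Qed.

End Abundance.

Definition avoiding x y := [set A in EE | (x \notin A) && (y \notin A)].

Definition link x y := [set p | ([set p; x] \in EE) && (p != y)].

Lemma card_EE_le x y : x != y ->
  #|EE| <= #|avoiding x y| + #|link x y| + #|link y x| + ([set x; y] \in EE).
Proof.
move=> xy.
pose at_x := (fun p => [set p; x]) @: link x y.
pose at_y := (fun p => [set p; y]) @: link y x.
pose EExy := [set A in EE | A == [set x; y]].
have sub : EE \subset avoiding x y :|: at_x :|: at_y :|: EExy.
  apply/subsetP => A AE; have [u [v Auv]] := EE_pair AE.
  rewrite !in_setU; case: (boolP (x \in A)) => xA; case: (boolP (y \in A)) => yA.
  - suff -> : A \in EExy by rewrite orbT.
    rewrite inE AE /= eq_sym eqEcard Auv !cards2 xy.
    apply/andP; split; last by case: (u != v).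
    by apply/subsetP => z /set2P[]->; rewrite -Auv.
  - have [p Ap pA] := pair_other Auv xA.
    suff -> : A \in at_x by rewrite !orbT.
    by apply/imsetP; exists p; rewrite // inE -Ap AE (memPn yA).
  - have [p Ap pA] := pair_other Auv yA.
    suff -> : A \in at_y by rewrite !orbT.
    by apply/imsetP; exists p; rewrite // inE -Ap AE (memPn xA).
  - by rewrite inE AE xA yA.
have card_EExy : #|EExy| <= ([set x; y] \in EE).
  case: (boolP ([set x; y] \in EE)) => xyE.
    apply: leq_trans (subset_leq_card (_ : EExy \subset [set [set x; y]])) _; last by rewrite cards1.
    by apply/subsetP => A; rewrite !inE => /andP[].
  suff -> : EExy = set0 by rewrite cards0.
  by apply/setP => A; rewrite !inE; apply: contraNF xyE => /andP[+ /eqP <-].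
apply: (leq_trans (subset_leq_card sub)).
have cardU (B C : {set {set T}}) : #|B :|: C| <= #|B| + #|C| by rewrite leq_card_setU.
apply: leq_trans (cardU _ _) (leq_add _ card_EExy).
apply: leq_trans (cardU _ _) (leq_add _ (leq_imset_card _ _)).
exact: leq_trans (cardU _ _) (leq_add (leqnn _) (leq_imset_card _ _)).
Qed.

Section UniversalPoles.
Variables x y : T.
Hypothesis poles : universal_poles x y.

Lemma universal_poles_neq : x != y.
Proof. by have [u [v /and3P[/theta4_poles_neq]]] := poles x x x. Qed.

Lemma avoiding_theta4 A : A \in avoiding x y -> exists u v, A = [set u; v] /\ theta4 u v x y.
Proof.
rewrite /avoiding inE => /and3P[AE xA yA]; have [u [v Auv]] := EE_pair AE.
rewrite Auv in AE xA yA; have [w [w' th]] := EE_spine AE.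
exists u, v; split=> //.
have /and5P[_ euv euw euw' /andP[evw evw']] := th.
have pole z : e u z -> e v z -> (z == x) || (z == y).
  move=> euz evz; rewrite sym_e in euz.
  have := universal_poles_triangle poles euv evz euz.
  move: xA yA; rewrite !inE !negb_or => /andP[/negbTE-> /negbTE->] /andP[/negbTE-> /negbTE->] /=.
  by rewrite !(eq_sym z).
by apply: (theta4_poles_eq th); apply: pole.
Qed.

Lemma avoiding_trivIset : trivIset (avoiding x y).
Proof.
have at_z A z : A \in avoiding x y -> z \in A -> exists2 q, A = [set z; q] & theta4 z q x y.
  move=> /avoiding_theta4[u [v [Auv th]]] zA; have [q Aq _] := pair_other Auv zA.
  exists q; first by rewrite Aq setUC.
  by apply: theta4_set2 th; rewrite -Auv Aq setUC.
apply/trivIsetP => A B AM BM AB; rewrite -setI_eq0; apply/set0Pn => -[z /setIP[zA zB]].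
have [q1 Aq1 th1] := at_z A z AM zA; have [q2 Bq2 th2] := at_z B z BM zB.
have q12 : q1 != q2 by apply: contraNneq AB => q12; rewrite Aq1 Bq2 q12.
have := universal_poles_theta4 poles (theta4_glue th1 th2 q12).
move: AM BM; rewrite /avoiding !inE Aq1 Bq2 !inE !negb_or.
by move=> /and3P[_ _ /andP[/negbTE-> /negbTE->]] /and3P[_ _ /andP[_ /negbTE->]].
Qed.

Lemma card_avoiding : 2 * #|avoiding x y| <= #|T| - 2.
Proof.
have /eqP card_cover := avoiding_trivIset.
have sum2 : \sum_(B in avoiding x y) #|B| = #|avoiding x y| * 2.
  rewrite -sum_nat_const; apply: eq_bigr => B /avoiding_theta4[u [v [-> /and5P[_ euv _ _ _]]]].
  by rewrite cards2 (adj_neq irr_e euv).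
have sub : cover (avoiding x y) \subset ~: [set x; y].
  apply/subsetP => z /bigcupP[B]; rewrite /avoiding !inE negb_or => /and3P[_ xB yB] zB.
  by rewrite (memPn xB z zB) (memPn yB z zB).
have := subset_leq_card sub; have := cardsC [set x; y].
by rewrite -card_cover sum2 cards2 universal_poles_neq; lia.
Qed.

End UniversalPoles.

Lemma spine_edges_bound x y : universal_poles x y ->
  #|link x y| <= 2 -> #|link y x| <= 2 ->
  2 * #|EE| <= #|T| + 8 /\
  (#|EE| = #|T|./2 + 4 -> contains_subgraph e (@matching_join_K2 ((#|T| - 2)./2))).
Proof.
move=> poles link_xy link_yx.
have xy := universal_poles_neq poles.
have card_EE := card_EE_le xy; have card_M := card_avoiding poles.
have := max_card [set x; y]; rewrite cards2 xy => n_ge2.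
split; first lia.
move=> EE_max; have xyE : [set x; y] \in EE.
  by apply/negPn/negP => /negbTE xyE; rewrite xyE in card_EE; lia.
have [u [v th]] := EE_spine xyE.
have /and5P[_ exy _ _ _] : theta4 x y u v := th.
apply: (contains_matching_join_K2 exy (avoiding_trivIset poles) _ (avoiding_theta4 poles)).
rewrite xyE in card_EE; lia.
Qed.

End SpineEdges.
End C3Theta4Free.

Section PlaneGraph.
Variables (T : finType) (e : rel T) (sigma : T * T -> T * T).
Hypotheses (sym_e : symmetric e) (irr_e : irreflexive e).
Hypothesis sigma_dart : forall p, p \in darts e -> sigma p \in darts e /\ (sigma p).1 = p.1.
Hypothesis sigma_cycle : forall p q, p \in darts e -> q \in darts e -> p.1 = q.1 ->
  fconnect sigma p q.

Lemma mem_darts p : (p \in darts e) = e p.1 p.2.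
Proof. by rewrite inE. Qed.

Lemma rev_dart p : p \in darts e -> (p.2, p.1) \in darts e.
Proof. by rewrite !mem_darts sym_e. Qed.

Lemma sigma_inj : {in darts e &, injective sigma}.
Proof.
move=> p q pd qd sigma_pq.
pose D := [set r in darts e | r.1 == p.1].
have sigmaD r : r \in D -> sigma r \in D.
  by move=> /setIdP[rd r1]; apply/setIdP; have [-> ->] := sigma_dart rd.
have D_sub : D \subset sigma @: D.
  apply/subsetP => r rD; have /setIdP[rd _] := rD.
  have [srd sr1] := sigma_dart rd.
  have /iter_findex := sigma_cycle srd rd sr1; rewrite -iterSr /= => <-.
  by apply: imset_f; elim: (findex _ _ _) => //= k /sigmaD.
have /imset_injP inj_D : #|sigma @: D| == #|D| by rewrite eqn_leq leq_imset_card subset_leq_card.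
apply: inj_D => //; apply/setIdP; split=> //.
by rewrite -(sigma_dart pd).2 sigma_pq (sigma_dart qd).2.
Qed.

Lemma facef_dart p : p \in darts e -> facef sigma p \in darts e /\ (facef sigma p).1 = p.2.
Proof. by move=> /rev_dart/sigma_dart. Qed.

Lemma facef_neq p : p \in darts e -> facef sigma p != p.
Proof.
move=> pd; apply/eqP => fp; have [_ fp1] := facef_dart pd.
by move: pd; rewrite mem_darts -fp1 fp irr_e.
Qed.

Lemma facef_inj : {in darts e &, injective (facef sigma)}.
Proof.
move=> [a b] [c d] pd qd /(sigma_inj (rev_dart pd) (rev_dart qd)).
by case=> -> ->.
Qed.

Variable F : {set {set T * T}}.
Hypothesis F_partition : partition F (darts e).
Hypothesis F_orbit : forall X, X \in F -> forall p, p \in X -> faceorb sigma p \subset X.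
Hypothesis F_connected : darts e != set0 ->
  forall p q, p \in darts e -> q \in darts e -> connect (face_rel e F) p q.

Definition tri (u v w : T) : {set T * T} := [set (u, v); (v, w); (w, u)].

Lemma triC u v w : tri u v w = tri v w u.
Proof. by apply/setP => z; rewrite !inE [RHS]orbC orbA. Qed.

Lemma face_sub_darts X : X \in F -> X \subset darts e.
Proof. by move=> XF; rewrite -(cover_partition F_partition); apply: bigcup_sup. Qed.

Lemma face_facef X p : X \in F -> p \in X -> facef sigma p \in X.
Proof. by move=> XF pX; apply: (subsetP (F_orbit XF pX)); rewrite inE fconnect1. Qed.

Lemma face_block X Y p : X \in F -> Y \in F -> p \in X -> p \in Y -> X = Y.
Proof.
have trivF : trivIset F by case/and3P: F_partition.
by move=> XF YF pX pY; rewrite -(def_pblock trivF XF pX) (def_pblock trivF YF pY).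
Qed.

Lemma three_face_tri X u v : X \in F -> #|X| = 3 -> (u, v) \in X ->
  exists w, [/\ X = tri u v w, e v w & e w u].
Proof.
move=> XF X3 pX; have Xd := subsetP (face_sub_darts XF).
have [] := card3_cycle (fun q => @face_facef X q XF) (sub_in2 Xd (facef_inj))
  (fun q qX => facef_neq (Xd q qX)) X3 pX.
set p1 := facef sigma (u, v); set p2 := facef sigma p1 => EX p3.
have p1X : p1 \in X by rewrite EX !inE eqxx orbT.
have p2X : p2 \in X by rewrite EX !inE eqxx !orbT.
have [d1 p1_1] := facef_dart (Xd _ pX).
have [d2 p2_1] := facef_dart (Xd _ p1X).
have [_ p3_1] := facef_dart (Xd _ p2X); rewrite p3 /= in p3_1.
have Ep1 : p1 = (v, p1.2) by rewrite [LHS]surjective_pairing p1_1.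
have Ep2 : p2 = (p1.2, u) by rewrite [LHS]surjective_pairing p2_1 p3_1.
exists p1.2; rewrite /tri EX -Ep1 -Ep2; split=> //.
- by move: d1; rewrite mem_darts p1_1.
- by move: d2; rewrite mem_darts p2_1 p3_1.
Qed.

Lemma tri_dart_from u v w p : u != v -> w != u -> p \in tri u v w -> p.1 = u -> p = (u, v).
Proof. by move=> uv wu; rewrite !inE => /orP[/orP[]|] /eqP-> //= E; move: uv wu; rewrite E eqxx. Qed.

Lemma opposite_tri_faces_adj u v w z : e u v -> e w u ->
  tri u v w \in F -> tri v u w \in F -> e u z -> (z == v) || (z == w).
Proof.
move=> euv ewu X1 X2 euz.
have [uv wu] := (adj_neq irr_e euv, adj_neq irr_e ewu).
have [duv duw duz] : [/\ (u, v) \in darts e, (u, w) \in darts e & (u, z) \in darts e].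
  by split; rewrite mem_darts // sym_e.
have sigma_uw : sigma (u, w) = (u, v).
  have wuX : (w, u) \in tri u v w by rewrite !inE eqxx orbT.
  exact: tri_dart_from uv wu (face_facef X1 wuX) (sigma_dart duw).2.
have sigma_uv : sigma (u, v) = (u, w).
  have vuX : (v, u) \in tri u w v by rewrite !inE eqxx orbT.
  rewrite -2!triC in X2.
  have [uw vu] : u != w /\ v != u by split; rewrite eq_sym.
  exact: tri_dart_from uw vu (face_facef X2 vuX) (sigma_dart duv).2.
have : (u, z) \in [set (u, v); (u, w)].
  rewrite -(iter_findex (sigma_cycle duv duz erefl)).
  elim: (findex _ _ _) => [|k]; first exact: set21.
  by rewrite iterS => /set2P[]->; rewrite ?sigma_uv ?sigma_uw ?set21 ?set22.
by rewrite !inE !xpair_eqE eqxx.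
Qed.

Lemma opposite_tri_faces_darts u v w : e u v -> e v w -> e w u ->
  tri u v w \in F -> tri v u w \in F -> darts e \subset tri u v w :|: tri v u w.
Proof.
move=> euv evw ewu X1 X2.
have [X1v X1w] : tri v w u \in F /\ tri w u v \in F by split; [rewrite -triC | rewrite triC].
have [X2v X2w] : tri w v u \in F /\ tri u w v \in F by split; [rewrite triC | rewrite -triC].
have adj_u := opposite_tri_faces_adj euv ewu X1 X2.
have adj_v := opposite_tri_faces_adj evw euv X1v X2v.
have adj_w := opposite_tri_faces_adj ewu evw X1w X2w.
set Y := tri u v w :|: tri v u w.
have adj_V a b : a \in [:: u; v; w] -> e a b -> b \in [:: u; v; w].
  by rewrite !inE => /or3P[]/eqP-> => [/adj_u|/adj_v|/adj_w] /orP[]/eqP->; rewrite eqxx ?orbT.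
have in_Y p : p \in darts e -> p.1 \in [:: u; v; w] -> p \in Y.
  case: p => a b; rewrite mem_darts !inE /= => eab /or3P[]/eqP Ea; subst a.
  - by case/orP: (adj_u b eab) => /eqP->; rewrite !eqxx ?orbT.
  - by case/orP: (adj_v b eab) => /eqP->; rewrite !eqxx ?orbT.
  - by case/orP: (adj_w b eab) => /eqP->; rewrite !eqxx ?orbT.
have Y_V p : p \in Y -> p.1 \in [:: u; v; w].
  by rewrite !inE -!orbA => /or3P[/eqP->|/eqP->|/or4P[]/eqP->]; rewrite eqxx ?orbT.
have duv : (u, v) \in darts e by rewrite mem_darts.
have darts_ne : darts e != set0 by apply/set0Pn; exists (u, v).
apply/subsetP => q qd; apply: (in_Y _ qd).
(* Steps of face_rel, inside one face or along a path of G, keep tails in {u, v, w}. *)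
pose V := [pred p : T * T | p.1 \in [:: u; v; w]].
apply: (connect_inv (A := V) _ (F_connected darts_ne duv qd)); last by rewrite !inE eqxx.
have memV p : (p \in V) = (p.1 \in [:: u; v; w]) by [].
move=> p p'; rewrite !memV => pV /and3P[pd p'd /orP[/existsP[X /and3P[XF pX p'X]]|]].
  apply: Y_V; move: (in_Y p pd pV) => /setUP[] pZ.
    by apply/setUP; left; rewrite (face_block X1 XF pZ pX).
  by apply/setUP; right; rewrite (face_block X2 XF pZ pX).
by move=> conn; apply: connect_inv adj_V conn pV.
Qed.

Lemma card_tri u v w : #|tri u v w| <= 3.
Proof. by rewrite /tri (leq_trans (leq_card_setU _ _)) // cards1 cards2 addn1 ltnS; case: (_ != _). Qed.

Lemma card_E_I_darts : #|E_I e F| <= #|darts e|.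
Proof.
apply: leq_trans (leq_imset_card _ _) _; apply/subset_leq_card/subsetP => q.
by rewrite inE => /andP[].
Qed.

Lemma on_three_face X u v : X \in F -> three_face X -> on_face (u, v) X ->
  exists w, [/\ X = tri u v w \/ X = tri v u w, e u v, e u w & e v w].
Proof.
move=> XF /eqP X3 on_uv.
have euv : e u v by case/orP: on_uv => /(subsetP (face_sub_darts XF)); rewrite mem_darts // sym_e.
case/orP: on_uv => /(three_face_tri XF X3)[w [EX e1 e2]]; exists w.
  by split; [left | | rewrite sym_e |].
by split; [right | | | rewrite sym_e].
Qed.

Definition tri_face u v w := (tri u v w \in F) || (tri v u w \in F).

Lemma EI_dart_theta4 u v : 6 < #|E_I e F| -> EI_dart F (u, v) ->
  exists w w', [/\ theta4 e u v w w', tri_face u v w & tri_face u v w'].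
Proof.
move=> EI_big /existsP[X /andP[XF /existsP[Y /andP[YF /and5P[XY X3 Y3 oX oY]]]]].
have [w [EX euv euw evw]] := on_three_face XF X3 oX.
have [w' [EY _ euw' evw']] := on_three_face YF Y3 oY.
have tri_face_of Z z : Z \in F -> Z = tri u v z \/ Z = tri v u z -> tri_face u v z.
  by move=> ZF [] EZ; rewrite /tri_face -EZ ZF ?orbT.
exists w, w'; rewrite (tri_face_of X) // (tri_face_of Y) //; split=> //.
have ww' : w != w'.
  apply: contraTneq EI_big => ww'; subst w'; rewrite -leqNgt.
  (* two faces bounded by uvw, in opposite orientations, carry all the darts *)
  have [X1 X2] : tri u v w \in F /\ tri v u w \in F.
    move: XY XF YF; case: EX => ->; case: EY => -> XY XF YF;
      first [by split | by rewrite eqxx in XY].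
  apply: leq_trans card_E_I_darts _.
  have ewu : e w u by rewrite sym_e.
  apply: leq_trans (subset_leq_card (opposite_tri_faces_darts euv evw ewu X1 X2)) _.
  by rewrite (leq_trans (leq_card_setU _ _)) // -[6]/(3 + 3) leq_add ?card_tri.
rewrite /theta4 /= !inE !negb_or ww' euv euw euw' evw evw' (adj_neq irr_e euv).
by rewrite (adj_neq irr_e euw) (adj_neq irr_e euw') (adj_neq irr_e evw) (adj_neq irr_e evw').
Qed.

Lemma EI_dart_rev p : EI_dart F (p.2, p.1) = EI_dart F p.
Proof.
have on_face_rev X : on_face (p.2, p.1) X = on_face p X by rewrite /on_face orbC -surjective_pairing.
by apply: eq_existsb => X; apply: andb_id2l => _; apply: eq_existsb => Y; rewrite !on_face_rev.
Qed.

Lemma EI_dart_of_E_I u v : [set u; v] \in E_I e F -> EI_dart F (u, v).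
Proof.
case/imsetP => q; rewrite inE mem_darts => /andP[/(adj_neq irr_e) q12 qI] /(eq_set2 q12).
by case=> [[-> ->]|[-> ->]]; rewrite ?EI_dart_rev -?surjective_pairing.
Qed.

Lemma tri_face_apex_uniq p q x y : tri p x y \in F -> tri q x y \in F -> p = q.
Proof.
move=> Xp Xq; have Xpd := subsetP (face_sub_darts Xp).
have epx : e p x by have := Xpd (p, x); rewrite mem_darts; apply; rewrite !inE eqxx.
have exy : e x y by have := Xpd (x, y); rewrite mem_darts; apply; rewrite !inE eqxx orbT.
have Epq : tri p x y = tri q x y.
  by apply: (face_block (p := (x, y)) Xp Xq); rewrite !inE eqxx orbT.
have : (y, p) \in tri q x y by rewrite -Epq !inE eqxx !orbT.
rewrite !inE !xpair_eqE => /orP[/orP[]|] /andP[/eqP yE /eqP pE] //.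
  by rewrite pE irr_e in epx.
by rewrite yE irr_e in exy.
Qed.

Lemma card_tri_face_apex x y : #|[set p | tri_face p x y]| <= 2.
Proof.
have apex_le1 a b : #|[set p | tri p a b \in F]| <= 1.
  by apply/card_le1_eqP => p q; rewrite !inE => Xp Xq; apply: tri_face_apex_uniq Xq Xp.
have sub : [set p | tri_face p x y] \subset [set p | tri p x y \in F] :|: [set p | tri p y x \in F].
  by apply/subsetP => p; rewrite !inE /tri_face (triC x p y).
by rewrite (leq_trans (subset_leq_card sub)) // (leq_trans (leq_card_setU _ _)) // -[2]/(1 + 1) leq_add.
Qed.

Hypothesis noC3Theta4 : ~ contains_subgraph e C3_Theta4.

Lemma link_tri_face x y p : 6 < #|E_I e F| ->
  universal_poles e x y -> p \in link (E_I e F) x y -> tri_face p x y.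
Proof.
move=> EI_big poles; rewrite inE => /andP[/EI_dart_of_E_I pxI py].
have [w [w' [th tw tw']]] := EI_dart_theta4 EI_big pxI.
have := universal_poles_theta4 sym_e irr_e noC3Theta4 poles th.
by rewrite !inE (eq_sym y p) (negbTE py) /= => /orP[]/eqP->.
Qed.

Lemma plane_E_I_bound : 81 < #|E_I e F| ->
  (forall z, degI e F z <= 9) ->
  2 * #|E_I e F| <= #|T| + 8 /\
  (#|E_I e F| = #|T|./2 + 4 -> contains_subgraph e (@matching_join_K2 ((#|T| - 2)./2))).
Proof.
move=> EI_big degI_le; have EI_6 : 6 < #|E_I e F| by apply: leq_trans EI_big.
have EI_pair A : A \in E_I e F -> exists u v, A = [set u; v].
  by case/imsetP => q _ ->; exists q.1, q.2.
have EI_spine u v : [set u; v] \in E_I e F -> exists w w', theta4 e u v w w'.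
  by move=> /EI_dart_of_E_I/(EI_dart_theta4 EI_6)[w [w' [th _ _]]]; exists w, w'.
have card_link a b : universal_poles e a b -> #|link (E_I e F) a b| <= 2.
  move=> poles; apply: leq_trans (card_tri_face_apex a b); apply/subset_leq_card/subsetP => p.
  by move/(link_tri_face EI_6 poles); rewrite inE.
have [x [y poles]] := exists_universal_poles sym_e irr_e noC3Theta4 EI_pair EI_spine degI_le EI_big.
apply: (spine_edges_bound sym_e irr_e noC3Theta4 EI_pair EI_spine poles); apply: card_link => //.
exact: universal_polesC.
Qed.

End PlaneGraph.

Theorem lemma6 (T : finType) (e : rel T) (sigma : T * T -> T * T)
  (F : {set {set T * T}}) :
  plane_embedding e sigma F ->
  174 <= #|T| ->
  ~ contains_subgraph e C3_Theta4 ->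
  #|T| < 2 * #|E_I e F| ->
  (forall u : T, degI e F u <= 9) ->
  2 * #|E_I e F| <= #|T| + 8 /\
  (#|E_I e F| = #|T|./2 + 4 ->
     contains_subgraph e (@matching_join_K2 ((#|T| - 2)./2))).
Proof.
case=> [[sym_e irr_e] [[sigma_dart sigma_cycle] [_ [F_partition [F_orbit [_ F_faces]]]]]].
move=> n_big noC n_lt degI_le.
have F_connected := fun darts_ne => (F_faces darts_ne).1.
have EI_big : 81 < #|E_I e F| by lia.
by apply: (plane_E_I_bound sym_e irr_e sigma_dart sigma_cycle F_partition F_orbit F_connected noC).
Qed.
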